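(* Let $(V,\le,\preccurlyeq)$ be a mixed lattice vector space whose cone $V_{sp}$ is generating ($V=V_{sp}-V_{sp}$), equipped with a vector topology $\tau$. The following are equivalent: (a) $\tau$ is locally mixed-full and the mixed lattice operations are continuous at zero; (b) for every neighborhood $U$ of zero there exists a neighborhood $W$ of zero with $W\subseteq U$ and $MS_1(W)\subseteq U$; (c) for every neighborhood $U$ of zero there exists a neighborhood $W$ of zero with $W\subseteq U$ and $MS_2(W)\subseteq U$.
   Context: A mixed lattice vector space $(V,\le,\preccurlyeq)$ is a real vector space $V$ with two partial orderings $\le$ (initial order) and $\preccurlyeq$ (specific order), each making $V$ a partially ordered vector space, with positive cones $V_p=\{x:0\le x\}$, $V_{sp}=\{x:0\preccurlyeq x\}$, such that: (1) for all $x,y$ the elements $x\curlyvee y=\min\{w: w\succcurlyeq x,\ w\ge y\}$ and $x\curlywedge y=\max\{w: w\preccurlyeq x,\ w\le y\}$ exist (min/max with respect to $\le$); (2) $x\preccurlyeq y$ implies $x\le y$; (3) $x\curlyvee y, x\curlywedge y\in V_{sp}$ whenever $x,y\in V_{sp}$. The mixed lattice operations are $(x,y)\mapsto x\curlyvee y$, $(x,y)\mapsto x\curlywedge y$; ''continuous at zero'' means continuous at $(0,0)$. Notation: $x^u=0\curlyvee x$, $x^l=0\curlyvee(-x)$, $s(x)=x^u+x^l$; $MS_1(A)=\{y: -s(x)\preccurlyeq y\le s(x)\text{ for some }x\in A\}$, $MS_2(A)=\{y: -s(x)\le y\preccurlyeq s(x)\text{ for some }x\in A\}$. $\tau$ is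 locally mixed-full if every neighborhood of zero contains a neighborhood $W$ of zero such that $y\in W$ and $0\preccurlyeq x\le y$ imply $x\in W$. *)

From HB Require Import structures.
From mathcomp Require Import all_boot all_order all_algebra.
From mathcomp Require Import all_classical all_reals all_analysis.
Set Implicit Arguments. Unset Strict Implicit. Unset Printing Implicit Defensive.
Import Order.TTheory GRing.Theory Num.Theory.
Local Open Scope classical_set_scope.
Local Open Scope ring_scope.

Section MixedLattice.
Variables (R : realType) (V : lmodType R).

Definition ordered_vs (le : V -> V -> Prop) : Prop :=
  [/\ (forall x, le x x),
      (forall x y, le x y -> le y x -> x = y),
      (forall x y z, le x y -> le y z -> le x z),
      (forall x y z, le x y -> le (x + z) (y + z)) &
      (forall (a : R) x y, 0 <= a -> le x y -> le (a *: x) (a *: y))].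

Definition is_mixed_sup (le sle : V -> V -> Prop) (x y w : V) : Prop :=
  [/\ sle x w, le y w & forall w', sle x w' -> le y w' -> le w w'].

Definition is_mixed_inf (le sle : V -> V -> Prop) (x y w : V) : Prop :=
  [/\ sle w x, le w y & forall w', sle w' x -> le w' y -> le w' w].

Definition mixed_lattice_vs (le sle : V -> V -> Prop) (msup minf : V -> V -> V)
  : Prop :=
  [/\ ordered_vs le /\ ordered_vs sle,
      (forall x y, is_mixed_sup le sle x y (msup x y)),
      (forall x y, is_mixed_inf le sle x y (minf x y)),
      (forall x y, sle x y -> le x y) &
      (forall x y, sle 0 x -> sle 0 y -> sle 0 (msup x y) /\ sle 0 (minf x y))].

Definition sp_generating (sle : V -> V -> Prop) : Prop :=
  forall v, exists a b, [/\ sle 0 a, sle 0 b & v = a - b].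

(* s(x) = x^u + x^l with x^u = 0 ⋎ x, x^l = 0 ⋎ (-x) *)
Definition upper_part (msup : V -> V -> V) (x : V) := msup 0 x.
Definition lower_part (msup : V -> V -> V) (x : V) := msup 0 (- x).
Definition sabs (msup : V -> V -> V) (x : V) :=
  upper_part msup x + lower_part msup x.

Definition MS1 (le sle : V -> V -> Prop) (msup : V -> V -> V) (A : set V)
  : set V :=
  [set y | exists2 x, A x & sle (- sabs msup x) y /\ le y (sabs msup x)].

Definition MS2 (le sle : V -> V -> Prop) (msup : V -> V -> V) (A : set V)
  : set V :=
  [set y | exists2 x, A x & le (- sabs msup x) y /\ sle y (sabs msup x)].

End MixedLattice.

Section Topo.
Variables (R : realType) (V : topologicalLmodType R).

Definition locally_mixed_full (le sle : V -> V -> Prop) : Prop :=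
  forall U, nbhs (0 : V) U ->
    exists W, [/\ nbhs (0 : V) W, W `<=` U &
      forall x y, W y -> sle 0 x -> le x y -> W x].

Definition ops_continuous_at_zero (msup minf : V -> V -> V) : Prop :=
  {for ((0 : V), (0 : V)), continuous (fun p : V * V => msup p.1 p.2)} /\
  {for ((0 : V), (0 : V)), continuous (fun p : V * V => minf p.1 p.2)}.
End Topo.

From HB Require Import structures.
From mathcomp Require Import all_boot all_order all_algebra.
From mathcomp Require Import all_classical all_reals all_analysis.
Import Order.TTheory GRing.Theory Num.Theory.
Local Open Scope classical_set_scope.
Local Open Scope ring_scope.

Set Implicit Arguments.
Unset Strict Implicit.
Unset Printing Implicit Defensive.

(** The argument rests on the identities [x ⋎ y = (y - x)^u + x] and
   [x ⋏ y = x - (x - y)^u] and on the sandwich [-s(x) ≼ x^u ≤ s(x)], which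
   puts [x^u] in [MS_1(W)] whenever [x ∈ W]. Hence if [MS_1(W)] is small, so
   are [x ⋎ y] and [x ⋏ y] for [x, y] near zero, and [W ∪ MS_1(W)] is a small
   mixed-full neighborhood. Conversely, for [y ∈ MS_1(W)] with witness [x] we
   have [0 ≼ y + s(x) ≤ 2 s(x)]; continuity of [⋎] at zero makes [s(x)] small,
   mixed-fullness then makes [y + s(x)] small, and so [y] is small. Finally
   [MS_2(W) = - MS_1(W)]. *)

Section OrderedVectorSpace.
Variables (R : realType) (V : lmodType R) (le : V -> V -> Prop).
Hypothesis ovs : ordered_vs le.

Lemma ovs_refl x : le x x.
Proof. by case: ovs. Qed.

Lemma ovs_anti x y : le x y -> le y x -> x = y.
Proof. by case: ovs => _ anti _ _ _; exact: anti. Qed.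

Lemma ovs_trans x y z : le x y -> le y z -> le x z.
Proof. by case: ovs => _ _ trans _ _; exact: trans. Qed.

Lemma ovs_lerD2r z x y : le x y -> le (x + z) (y + z).
Proof. by case: ovs => _ _ _ lerD2r _; exact: lerD2r. Qed.

Lemma ovs_lerN2 x y : le x y -> le (- y) (- x).
Proof.
move=> /(ovs_lerD2r (- x - y)).
by rewrite addrA subrr add0r addrC addrNK.
Qed.

Lemma ovs_lerD x y z t : le x y -> le z t -> le (x + z) (y + t).
Proof.
move=> le_xy le_zt; apply: (ovs_trans (ovs_lerD2r z le_xy)).
by rewrite !(addrC y); exact: ovs_lerD2r.
Qed.

Lemma ovs_addr_ge0 x y : le 0 x -> le 0 y -> le 0 (x + y).
Proof. by move=> x_ge0 y_ge0; rewrite -[0]addr0; exact: ovs_lerD. Qed.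

End OrderedVectorSpace.

Section MixedLatticeVectorSpace.
Variables (R : realType) (V : lmodType R).
Variables (le sle : V -> V -> Prop) (msup minf : V -> V -> V).
Hypothesis mlvs : mixed_lattice_vs le sle msup minf.

Let ovs_le : ordered_vs le. Proof. by case: mlvs => -[]. Qed.
Let ovs_sle : ordered_vs sle. Proof. by case: mlvs => -[]. Qed.
Let sle_le x y : sle x y -> le x y. Proof. by case: mlvs => _ _ _ sle_le _; exact: sle_le. Qed.
Let msupP x y : is_mixed_sup le sle x y (msup x y). Proof. by case: mlvs. Qed.

Lemma msup_unique x y w : is_mixed_sup le sle x y w -> msup x y = w.
Proof.
case=> sxw lyw w_min; have [sxm lym m_min] := msupP x y.
by apply: (ovs_anti ovs_le); [exact: m_min | exact: w_min].
Qed.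

Lemma minf_unique x y w : is_mixed_inf le sle x y w -> minf x y = w.
Proof.
case=> swx lwy w_max; case: mlvs => _ _ /(_ x y) [smx lmy m_max] _ _.
by apply: (ovs_anti ovs_le); [exact: w_max | exact: m_max].
Qed.

Lemma msupDr c x y : msup (x + c) (y + c) = msup x y + c.
Proof.
apply: msup_unique; have [sxm lym m_min] := msupP x y.
split; [exact: ovs_lerD2r | exact: ovs_lerD2r |] => w sxw lyw.
rewrite -(subrK c w); apply: (ovs_lerD2r ovs_le); apply: m_min.
- by move: sxw => /(ovs_lerD2r ovs_sle (- c)); rewrite addrK.
- by move: lyw => /(ovs_lerD2r ovs_le (- c)); rewrite addrK.
Qed.

Lemma msupE x y : msup x y = msup 0 (y - x) + x.
Proof. by rewrite -msupDr add0r subrK. Qed.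

Lemma minf_msupN x y : minf x y = - msup (- x) (- y).
Proof.
apply: minf_unique; have [sxm lym m_min] := msupP (- x) (- y).
split.
- by move: sxm => /(ovs_lerN2 ovs_sle); rewrite opprK.
- by move: lym => /(ovs_lerN2 ovs_le); rewrite opprK.
- move=> w swx lwy; rewrite -[w]opprK; apply: ovs_lerN2 => //.
  by apply: m_min; [exact: ovs_lerN2 | exact: ovs_lerN2].
Qed.

Lemma minfE x y : minf x y = x - msup 0 (x - y).
Proof. by rewrite minf_msupN msupE opprK opprD opprK addrC (addrC (- y)). Qed.

Lemma msup00 : msup 0 0 = 0.
Proof. by apply: msup_unique; split; [exact: ovs_refl | exact: ovs_refl |]. Qed.

Lemma minf00 : minf 0 0 = 0.
Proof. by rewrite minfE subrr msup00 subrr. Qed.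

Lemma msup0_sge0 t : sle 0 (msup 0 t).
Proof. by case: (msupP 0 t). Qed.

Lemma le_msup0 t : le t (msup 0 t).
Proof. by case: (msupP 0 t). Qed.

Lemma sabs_sge0 t : sle 0 (sabs msup t).
Proof. exact: (ovs_addr_ge0 ovs_sle (msup0_sge0 t) (msup0_sge0 (- t))). Qed.

Lemma msup0_le_sabs t : le (msup 0 t) (sabs msup t).
Proof.
have := ovs_lerD2r ovs_le (msup 0 t) (sle_le (msup0_sge0 (- t))).
by rewrite add0r addrC.
Qed.

Lemma le_sabs t : le t (sabs msup t).
Proof. exact: (ovs_trans ovs_le (le_msup0 t) (msup0_le_sabs t)). Qed.

Lemma sle_oppr_sabs_sge0 t x : sle 0 x -> sle (- sabs msup t) x.
Proof.
apply: (ovs_trans ovs_sle).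
by have := ovs_lerN2 ovs_sle (sabs_sge0 t); rewrite oppr0.
Qed.

Lemma MS1_msup0 (A : set V) t : A t -> MS1 le sle msup A (msup 0 t).
Proof.
move=> At; exists t => //; split; last exact: msup0_le_sabs.
exact/sle_oppr_sabs_sge0/msup0_sge0.
Qed.

Lemma MS1_sge0 (A : set V) t x :
  A t -> sle 0 x -> le x (sabs msup t) -> MS1 le sle msup A x.
Proof.
by move=> At x_sge0 x_le; exists t => //; split; first exact: sle_oppr_sabs_sge0.
Qed.

Lemma MS2_oppr (A : set V) y : MS2 le sle msup A y -> MS1 le sle msup A (- y).
Proof.
case=> x Ax [ly sy]; exists x => //; split; first exact: ovs_lerN2.
by move: ly => /(ovs_lerN2 ovs_le); rewrite opprK.
Qed.

Lemma MS1_oppr (A : set V) y : MS1 le sle msup A y -> MS2 le sle msup A (- y).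
Proof.
case=> x Ax [sy ly]; exists x => //; split; first exact: ovs_lerN2.
by move: sy => /(ovs_lerN2 ovs_sle); rewrite opprK.
Qed.

End MixedLatticeVectorSpace.

Section TopologicalZmodule.
Variable V : topologicalZmodType.

Lemma nbhs0_oppr (U : set V) : nbhs 0 U -> nbhs 0 (fun v => U (- v)).
Proof. by have := @opp_continuous V 0 U; rewrite /= oppr0. Qed.

Lemma nbhs0_symmetric_half (U : set V) : nbhs 0 U ->
  exists W, [/\ nbhs 0 W, W `<=` U, (forall a, W a -> W (- a)) &
                (forall a b, W a -> W b -> U (a + b))].
Proof.
move=> U0; have := @add_continuous V (0, 0) U; rewrite /= addr0.
move=> /(_ U0) [[W1 W2]] [/= W1_0 W2_0] W12U.
pose W0 := W1 `&` W2.
have W0_add a b : W0 a -> W0 b -> U (a + b).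
  by move=> [W1a _] [_ W2b]; exact: (W12U (a, b)).
have W0_0 : nbhs 0 W0 by exact: filterI.
exists (fun v => W0 v /\ W0 (- v)); split.
- exact: filterI (nbhs0_oppr W0_0).
- by move=> a [W0a _]; rewrite -[a]addr0; apply: W0_add => //; exact: nbhs_singleton.
- by move=> a [W0a W0Na]; rewrite opprK.
- by move=> a b [W0a _] [W0b _]; exact: W0_add.
Qed.

Lemma continuous2_at0 (f : V -> V -> V) : f 0 0 = 0 ->
  (forall U, nbhs 0 U -> exists2 N, nbhs 0 N & forall p q, N p -> N q -> U (f p q)) ->
  {for (0, 0), continuous (fun z : V * V => f z.1 z.2)}.
Proof.
move=> f00 small U; rewrite /= f00 => /small [N N0 NU].
by exists (N, N) => // -[p q] [/= Np Nq]; exact: NU.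
Qed.

Definition locally_MS_bounded (MS : set V -> set V) :=
  forall U, nbhs 0 U -> exists W, [/\ nbhs 0 W, W `<=` U & MS W `<=` U].

Lemma locally_MS_bounded_oppr (MS MS' : set V -> set V) :
  (forall W y, MS' W y -> MS W (- y)) ->
  locally_MS_bounded MS -> locally_MS_bounded MS'.
Proof.
move=> MS'_MSN MS_small U U0.
have [W [W0 WU MSWU]] := MS_small _ (filterI U0 (nbhs0_oppr U0)).
exists W; split => // [v /WU [] //|y /MS'_MSN /MSWU []].
by rewrite opprK.
Qed.

End TopologicalZmodule.

Section MixedLatticeTopology.
Variables (R : realType) (V : topologicalLmodType R).
Variables (le sle : V -> V -> Prop) (msup minf : V -> V -> V).
Hypothesis mlvs : mixed_lattice_vs le sle msup minf.

Let ovs_sle : ordered_vs sle. Proof. by case: mlvs => -[]. Qed.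
Let ovs_le : ordered_vs le. Proof. by case: mlvs => -[]. Qed.

Lemma nbhs0_msup0 (U : set V) :
  {for (0, 0), continuous (fun z : V * V => msup z.1 z.2)} ->
  nbhs 0 U -> nbhs 0 (fun t => U (msup 0 t)).
Proof.
move=> msup_cont; rewrite -{1}(msup00 mlvs) => /msup_cont [[A B] [/= A0 B0] ABU].
by apply: filterS B0 => t Bt; exact: (ABU (0, t) (conj (nbhs_singleton A0) Bt)).
Qed.

Lemma locally_MS1_bounded_of_mixed_full :
  locally_mixed_full le sle -> ops_continuous_at_zero msup minf ->
  locally_MS_bounded (MS1 le sle msup).
Proof.
move=> mixed_full [msup_cont _] U U0.
have [U1 [U1_0 _ U1N U1D]] := nbhs0_symmetric_half U0.
have [F [F0 FU1 F_full]] := mixed_full U1 U1_0.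
have [F1 [F1_0 F1F _ F1D]] := nbhs0_symmetric_half F0.
have [G [G0 _ _ GD]] := nbhs0_symmetric_half F1_0.
exists (fun t => U t /\ G (msup 0 t) /\ G (msup 0 (- t))); split.
- have G_msup0 := nbhs0_msup0 msup_cont G0.
  by apply: (filterI U0); apply: (filterI G_msup0); exact: (nbhs0_oppr G_msup0).
- by move=> t [].
move=> y [x [_ [Gu Gl]] [sy ly]].
have F1s : F1 (sabs msup x) by exact: GD.
have Fys : F (y + sabs msup x).
  apply: F_full (F1D _ _ F1s F1s) _ _.
    by move: sy => /(ovs_lerD2r ovs_sle (sabs msup x)); rewrite addNr.
  exact: ovs_lerD2r.
by rewrite -(addrK (sabs msup x) y); apply: U1D; [exact: FU1 | exact/U1N/FU1/F1F].
Qed.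

Section LocallyMS1Bounded.
Hypothesis MS1_small : locally_MS_bounded (MS1 le sle msup).

Lemma locally_mixed_full_of_MS1 : locally_mixed_full le sle.
Proof.
move=> U /MS1_small [W [W0 WU MS1WU]].
exists (W `|` MS1 le sle msup W); split.
- by apply: filterS W0 => v; left.
- by move=> v [/WU | /MS1WU].
- move=> x y Wy x_sge0 lxy; right.
  case: Wy => [Wy | [t Wt [_ lyt]]].
    exact: (MS1_sge0 mlvs Wy x_sge0 (ovs_trans ovs_le lxy (le_sabs mlvs y))).
  exact: (MS1_sge0 mlvs Wt x_sge0 (ovs_trans ovs_le lxy lyt)).
Qed.

Lemma msup_minf_small (U : set V) : nbhs 0 U ->
  exists2 N, nbhs 0 N & forall p q, N p -> N q -> U (msup p q) /\ U (minf p q).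
Proof.
move=> U0; have [U1 [U1_0 _ U1N U1D]] := nbhs0_symmetric_half U0.
have [W [W0 WU1 MS1WU1]] := MS1_small U1_0.
have [N [N0 NW NN ND]] := nbhs0_symmetric_half W0.
have U1_msup0 a b : N a -> N b -> U1 (msup 0 (a - b)).
  by move=> Na Nb; exact/MS1WU1/(MS1_msup0 mlvs)/ND/NN.
exists N => // p q Np Nq; have U1p := WU1 _ (NW _ Np).
rewrite (msupE mlvs) (minfE mlvs); split.
- exact: (U1D _ _ (U1_msup0 _ _ Nq Np) U1p).
- exact: (U1D _ _ U1p (U1N _ (U1_msup0 _ _ Np Nq))).
Qed.

Lemma ops_continuous_at_zero_of_MS1 : ops_continuous_at_zero msup minf.
Proof.
split; apply: continuous2_at0.
- exact: (msup00 mlvs).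
- by move=> U /msup_minf_small [N N0 NU]; exists N => // p q Np Nq; case: (NU p q).
- exact: (minf00 mlvs).
- by move=> U /msup_minf_small [N N0 NU]; exists N => // p q Np Nq; case: (NU p q).
Qed.

End LocallyMS1Bounded.

Lemma mixed_full_continuous_iff_MS1 :
  locally_mixed_full le sle /\ ops_continuous_at_zero msup minf <->
  locally_MS_bounded (MS1 le sle msup).
Proof.
split=> [[] | MS1_small]; first exact: locally_MS1_bounded_of_mixed_full.
split; first exact: (locally_mixed_full_of_MS1 MS1_small).
exact: (ops_continuous_at_zero_of_MS1 MS1_small).
Qed.

Lemma locally_MS1_iff_MS2 :
  locally_MS_bounded (MS1 le sle msup) <-> locally_MS_bounded (MS2 le sle msup).
Proof.
by split; apply: locally_MS_bounded_oppr; [exact: (MS2_oppr mlvs) | exact: (MS1_oppr mlvs)].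
Qed.

End MixedLatticeTopology.

Theorem theorem3p15 (R : realType) (V : topologicalLmodType R)
  (le sle : V -> V -> Prop) (msup minf : V -> V -> V) :
  mixed_lattice_vs le sle msup minf ->
  sp_generating sle ->
  [/\ (locally_mixed_full le sle /\ ops_continuous_at_zero msup minf) <->
        (forall U, nbhs (0 : V) U -> exists W,
           [/\ nbhs (0 : V) W, W `<=` U & MS1 le sle msup W `<=` U]),
      (locally_mixed_full le sle /\ ops_continuous_at_zero msup minf) <->
        (forall U, nbhs (0 : V) U -> exists W,
           [/\ nbhs (0 : V) W, W `<=` U & MS2 le sle msup W `<=` U]) &
      (forall U, nbhs (0 : V) U -> exists W,
           [/\ nbhs (0 : V) W, W `<=` U & MS1 le sle msup W `<=` U]) <->
      (forall U, nbhs (0 : V) U -> exists W,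
           [/\ nbhs (0 : V) W, W `<=` U & MS2 le sle msup W `<=` U])].
Proof.
(* The equivalences hold without [V_sp] being generating. *)
move=> mlvs _.
have a_b := mixed_full_continuous_iff_MS1 mlvs.
have b_c := locally_MS1_iff_MS2 mlvs.
by split=> //; exact: iff_trans a_b b_c.
Qed.
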